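(* Consider a family, indexed by integers $m\ge 2$, of normalized $2^m$-APSK constellations $\mathcal{X}_m$ with $K_m$ rings, and let $\mathsf{X}$ (depending on $m$) be uniformly distributed over $\mathcal{X}_m$. Suppose that, with all implied constants independent of $m$ and $k$: (1) the number of rings satisfies $K_m=\Theta(\sqrt{2^m})$; (2) the pre-normalization radii $\widetilde r_1,\dots,\widetilde r_{K_m}$ satisfy $\widetilde r_k=\Theta(k/\sqrt{2^m})$ for $1\le k\le K_m$ and $\widetilde r_{k+1}-\widetilde r_k=\Theta(1/\sqrt{2^m})$ for $1\le k\le K_m-1$; (3) the numbers of points per ring are $N_k=a_m k$ for $1\le k\le K_m-1$ and $N_{K_m}=2^m-\sum_{i=1}^{K_m-1}N_i$, where the positive integer $a_m$ is chosen so that $N_{K_m}>0$ and $N_{K_m}=\Theta(K_m)$; (4) the phase offsets are aligned across rings: $\phi_{k+1}-\phi_k=0$ for $1\le k\le K_m-1$. Then $d_{\min}^2(\mathsf{X})=\Theta(2^{-m})$.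
   Context: A $2^m$-APSK constellation ($m\ge 2$) with $K_m$ rings is a set $$\mathcal{X}=\bigcup_{k=1}^{K_m}\left\{ r_k e^{j(\phi_k+2\pi n/N_k)} : n=0,1,\dots,N_k-1\right\}\subset\mathbb{C},$$ where $N_k\ge1$ is the number of points on ring $k$, $\sum_k N_k=2^m$, $r_k>0$ the ring radius and $\phi_k$ the phase offset. The normalized radii are obtained from pre-normalization radii $\widetilde r_k$ by $r_k=\widetilde r_k/\sqrt{E_0}$ with $E_0=\frac{1}{2^m}\sum_{k=1}^{K_m}N_k\widetilde r_k^2$, so that $\frac{1}{2^m}\sum_{x\in\mathcal{X}}|x|^2=1$. For $\mathsf{X}$ uniform on $\mathcal{X}$, $d_{\min}(\mathsf{X})$ is the minimum Euclidean distance between distinct points of $\mathcal{X}$. The notation $f=\Theta(g)$ means $c_1 g\le f\le c_2 g$ for positive constants $c_1,c_2$ independent of $m$ (and $k$). *)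

From Stdlib Require Import Reals Lra Lia.
Open Scope R_scope.

Fixpoint sumR1 (f : nat -> R) (n : nat) : R :=
  match n with O => 0 | S p => sumR1 f p + f (S p) end.

Fixpoint sumN1 (f : nat -> nat) (n : nat) : nat :=
  match n with O => O | S p => (sumN1 f p + f (S p))%nat end.

Definition E0 (m K : nat) (N : nat -> nat) (rt : nat -> R) : R :=
  / (2 ^ m) * sumR1 (fun k => INR (N k) * rt k ^ 2) K.

Definition rnorm (m K : nat) (N : nat -> nat) (rt : nat -> R) (k : nat) : R :=
  rt k / sqrt (E0 m K N rt).

(* The 2^m-APSK constellation (as a subset of C = R*R, a point z = (Re z, Im z)):
   points r_k e^{j(phi_k + 2 pi n / N_k)}, 1 <= k <= K, 0 <= n < N_k. *)
Definition apsk (m K : nat) (N : nat -> nat) (rt phi : nat -> R) (z : R * R) : Prop :=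
  exists k n : nat, (1 <= k <= K)%nat /\ (n < N k)%nat /\
    let r := rnorm m K N rt k in
    let t := phi k + 2 * PI * INR n / INR (N k) in
    z = (r * cos t, r * sin t).

Definition dist2 (x y : R * R) : R := (fst x - fst y) ^ 2 + (snd x - snd y) ^ 2.

Definition is_dmin2 (X : R * R -> Prop) (d : R) : Prop :=
  (exists x y, X x /\ X y /\ x <> y /\ dist2 x y = d) /\
  (forall x y, X x -> X y -> x <> y -> d <= dist2 x y).

(* The normalisation energy E0 is bounded above and below by constants: before
   normalisation every radius is O(1), and since the rings k < K_m carry
   a_m k >= k points each, sum_k N_k k^2 >= K_m^4 / 16, which is of order 4^m.
   Two distinct points either lie on different rings, at squared distance at least
   (r_{k+1} - r_k)^2, of order 2^{-m}, or on a common ring k, where the chord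
   2 r_k sin (pi / N_k) is of order r_k / N_k.  Since a_m K_m^2 / 4 < 2^m forces
   a_m = O(1), N_k = O(k) while r_k is of order k / sqrt (2^m).  Conversely, the
   aligned phases put point 0 of rings 1 and 2 on a common ray, at distance
   r_2 - r_1 = O(2^{-m/2}); with a single ring, any two of its points are at
   distance at most 2 r_1 = O(2^{-m/2}). *)

From Stdlib Require Import Reals Lra Lia List Classical.
Open Scope R_scope.

Lemma sin_ge_third x : 0 <= x <= PI / 2 -> x / 3 <= sin x.
Proof.
  intros [Hx0 Hx1]. pose proof PI_4.
  (* sin x >= x - x^3/6, and x^2 <= 4 because PI <= 4. *)
  destruct (sin_bound x 0 Hx0 ltac:(lra)) as [Hsin _].
  replace (sin_approx x (2 * 0 + 1)) with (x - x ^ 3 / 6) in Hsin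
    by (unfold sin_approx, sin_term; simpl; field).
  nra.
Qed.

Lemma sin_pi_frac_ge (j Nn : nat) : (1 <= j < Nn)%nat ->
  PI / (3 * INR Nn) <= sin (PI * INR j / INR Nn).
Proof.
  pose proof PI_RGT_0.
  assert (Hhalf : forall i, (1 <= i)%nat -> (2 * i <= Nn)%nat ->
            PI / (3 * INR Nn) <= sin (PI * INR i / INR Nn)).
  { intros i Hi Hi2.
    assert (1 <= INR i) by (apply (le_INR 1); lia).
    assert (INR (2 * i) <= INR Nn) by (apply le_INR; lia).
    rewrite mult_INR in *; simpl (INR 2) in *.
    eapply Rle_trans; [|apply sin_ge_third; split].
    - apply Rmult_le_reg_r with (3 * INR Nn); [lra|].
      unfold Rdiv; field_simplify; nra.
    - apply Rmult_le_pos; [|left; apply Rinv_0_lt_compat]; nra.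
    - apply Rmult_le_reg_r with (2 * INR Nn); [lra|].
      unfold Rdiv; field_simplify; nra. }
  intros Hj. destruct (Nat.le_gt_cases (2 * j) Nn).
  - apply Hhalf; lia.
  - replace (PI * INR j / INR Nn) with (PI - PI * INR (Nn - j) / INR Nn).
    + rewrite sin_PI_x. apply Hhalf; lia.
    + assert (0 < INR Nn) by (apply lt_0_INR; lia).
      rewrite minus_INR by lia. field. lra.
Qed.

Lemma Rmin_scale_le x y u t : 0 <= x -> 0 <= y -> 0 <= u <= t ->
  Rmin x y * u <= Rmin (x * t) (y * t).
Proof.
  intros Hx Hy Hut. assert (0 <= Rmin x y) by (apply Rmin_glb; lra).
  apply Rmin_glb; eapply Rle_trans; try (apply Rmult_le_compat_l; [|apply Hut]; lra);
    apply Rmult_le_compat_r; auto using Rmin_l, Rmin_r; lra.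
Qed.

Lemma dist2_comm x y : dist2 x y = dist2 y x.
Proof. unfold dist2. ring. Qed.

Lemma dist2_refl x : dist2 x x = 0.
Proof. unfold dist2. ring. Qed.

Lemma neq_of_dist2_pos x y : 0 < dist2 x y -> x <> y.
Proof. intros Hxy <-. rewrite dist2_refl in Hxy. lra. Qed.

Definition polar (r t : R) : R * R := (r * cos t, r * sin t).

Lemma dist2_polar r1 r2 t1 t2 :
  dist2 (polar r1 t1) (polar r2 t2) = r1 ^ 2 + r2 ^ 2 - 2 * r1 * r2 * cos (t1 - t2).
Proof.
  unfold dist2, polar; simpl. rewrite cos_minus.
  pose proof (sin2_cos2 t1); pose proof (sin2_cos2 t2). unfold Rsqr in *. nra.
Qed.

Lemma dist2_polar_same_radius r t1 t2 :
  dist2 (polar r t1) (polar r t2) = 4 * r ^ 2 * sin ((t1 - t2) / 2) ^ 2.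
Proof.
  rewrite dist2_polar. replace (t1 - t2) with (2 * ((t1 - t2) / 2)) at 1 by field.
  rewrite cos_2a_sin. ring.
Qed.

Lemma dist2_polar_same_radius_le r t1 t2 : dist2 (polar r t1) (polar r t2) <= 4 * r ^ 2.
Proof.
  rewrite dist2_polar_same_radius. pose proof (SIN_bound ((t1 - t2) / 2)).
  assert (sin ((t1 - t2) / 2) ^ 2 <= 1) by nra.
  assert (0 <= r ^ 2) by apply pow2_ge_0. nra.
Qed.

Lemma dist2_polar_same_angle r1 r2 t : dist2 (polar r1 t) (polar r2 t) = (r1 - r2) ^ 2.
Proof. rewrite dist2_polar, Rminus_diag, cos_0. ring. Qed.

Lemma dist2_polar_ge_radius_gap r1 r2 t1 t2 : 0 <= r1 -> 0 <= r2 ->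
  (r1 - r2) ^ 2 <= dist2 (polar r1 t1) (polar r2 t2).
Proof.
  intros. rewrite dist2_polar. pose proof (COS_bound (t1 - t2)).
  assert (0 <= r1 * r2) by nra. nra.
Qed.

Lemma dist2_polar_roots_ge r ph (Nn n n' : nat) :
  (n < Nn)%nat -> (n' < Nn)%nat -> n <> n' ->
  4 * (PI * r / (3 * INR Nn)) ^ 2 <=
  dist2 (polar r (ph + 2 * PI * INR n / INR Nn)) (polar r (ph + 2 * PI * INR n' / INR Nn)).
Proof.
  intros Hn Hn' Hne. pose proof PI_RGT_0.
  assert (0 < INR Nn) by (apply lt_0_INR; lia).
  assert (Hsin : forall j, (1 <= j < Nn)%nat ->
            (PI / (3 * INR Nn)) ^ 2 <= sin (PI * INR j / INR Nn) ^ 2).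
  { intros j Hj. apply pow_incr. split; [apply Rlt_le, Rdiv_lt_0_compat; lra|].
    apply sin_pi_frac_ge; lia. }
  rewrite dist2_polar_same_radius.
  replace (4 * (PI * r / (3 * INR Nn)) ^ 2) with (4 * r ^ 2 * (PI / (3 * INR Nn)) ^ 2) by (field; lra).
  apply Rmult_le_compat_l; [pose proof (pow2_ge_0 r); lra|].
  destruct (Nat.lt_gt_cases n n') as [[Hlt|Hlt] _]; [exact Hne|..].
  - replace ((ph + 2 * PI * INR n / INR Nn - (ph + 2 * PI * INR n' / INR Nn)) / 2)
      with (- (PI * INR (n' - n) / INR Nn)) by (rewrite minus_INR by lia; field; lra).
    rewrite sin_neg. replace ((- sin (PI * INR (n' - n) / INR Nn)) ^ 2)
      with (sin (PI * INR (n' - n) / INR Nn) ^ 2) by ring.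
    apply Hsin; lia.
  - replace ((ph + 2 * PI * INR n / INR Nn - (ph + 2 * PI * INR n' / INR Nn)) / 2)
      with (PI * INR (n - n') / INR Nn) by (rewrite minus_INR by lia; field; lra).
    apply Hsin; lia.
Qed.

Lemma exists_min_in_list {A} (f : A -> R) (P : A -> Prop) (l : list A) :
  (exists a, In a l /\ P a) ->
  exists a, In a l /\ P a /\ forall b, In b l -> P b -> f a <= f b.
Proof.
  induction l as [|x l IH]; intros [a [Ha Pa]]; [destruct Ha|].
  destruct (classic (exists a, In a l /\ P a)) as [Hex|Hno].
  - destruct (IH Hex) as [b [Hb [Pb Hmin]]].
    destruct (classic (P x /\ f x <= f b)) as [[Px Hx]|Hn].
    + exists x. split; [left; auto|]. split; auto.
      intros c [<-|Hc] Pc; [lra|]. specialize (Hmin c Hc Pc); lra.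
    + exists b. split; [right; auto|]. split; auto.
      intros c [<-|Hc] Pc; [|auto]. apply Rnot_lt_le. intro Hlt. apply Hn; split; auto; lra.
  - destruct Ha as [<-|Ha]; [|exfalso; apply Hno; eauto].
    exists x. split; [left; auto|]. split; auto.
    intros c [<-|Hc] Pc; [lra|exfalso; apply Hno; eauto].
Qed.

Lemma is_dmin2_exists_between (X : R * R -> Prop) (L : list (R * R)) lo hi :
  (forall z, X z <-> In z L) ->
  (forall x y, X x -> X y -> x <> y -> lo <= dist2 x y) ->
  (exists x y, X x /\ X y /\ x <> y /\ dist2 x y <= hi) ->
  exists d, is_dmin2 X d /\ lo <= d <= hi.
Proof.
  intros HL Hlo [x0 [y0 [Hx0 [Hy0 [Hxy0 Hhi]]]]].
  destruct (exists_min_in_list (fun p => dist2 (fst p) (snd p)) (fun p => fst p <> snd p)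
              (list_prod L L)) as [[x y] [Hin [Hxy Hmin]]].
  { exists (x0, y0). split; [apply in_prod; apply HL; auto|auto]. }
  apply in_prod_iff in Hin as [Hx Hy]. simpl in Hxy.
  exists (dist2 x y). split; [split|split].
  - exists x, y. repeat split; try apply HL; auto.
  - intros p q Hp Hq Hpq. apply (Hmin (p, q)); [apply in_prod; apply HL|]; auto.
  - apply Hlo; try apply HL; auto.
  - eapply Rle_trans; [apply (Hmin (x0, y0))|exact Hhi]; [apply in_prod; apply HL|]; auto.
Qed.

Definition apsk_point (r phi : nat -> R) (N : nat -> nat) (k n : nat) : R * R :=
  polar (r k) (phi k + 2 * PI * INR n / INR (N k)).

Lemma apsk_iff m K N rt phi z : apsk m K N rt phi z <->
  exists k n, (1 <= k <= K)%nat /\ (n < N k)%nat /\ z = apsk_point (rnorm m K N rt) phi N k n.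
Proof. reflexivity. Qed.

Lemma apsk_enum m K N rt phi z : apsk m K N rt phi z <->
  In z (flat_map (fun k => map (apsk_point (rnorm m K N rt) phi N k) (seq 0 (N k))) (seq 1 K)).
Proof.
  rewrite apsk_iff, in_flat_map. split.
  - intros [k [n [Hk [Hn ->]]]]. exists k. split; [apply in_seq; lia|].
    apply in_map. apply in_seq. lia.
  - intros [k [Hk Hz]]. apply in_seq in Hk. apply in_map_iff in Hz as [n [<- Hn]].
    apply in_seq in Hn. exists k, n. repeat split; lia.
Qed.

Section RingGeometry.

Variables (r phi : nat -> R) (N : nat -> nat) (K : nat) (delta rho : R).
Hypothesis delta_ge0 : 0 <= delta.
Hypothesis rho_ge0 : 0 <= rho.
Hypothesis radius_gap : forall k, (1 <= k < K)%nat -> r k + delta <= r (S k).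
Hypothesis radius_ge_ring_size : forall k, (1 <= k <= K)%nat -> rho * INR (N k) <= r k.

Lemma radius_ge0 k : (1 <= k <= K)%nat -> 0 <= r k.
Proof.
  intros Hk. pose proof (radius_ge_ring_size k Hk).
  assert (0 <= rho * INR (N k)) by (apply Rmult_le_pos; [lra|apply pos_INR]). lra.
Qed.

Lemma radius_gap_trans k k' : (1 <= k)%nat -> (k < k' <= K)%nat -> r k + delta <= r k'.
Proof.
  intros Hk. induction k' as [|k' IH]; intros Hk'; [lia|].
  destruct (Nat.eq_dec k' k) as [->|Hne]; [apply radius_gap; lia|].
  pose proof (IH ltac:(lia)). pose proof (radius_gap k' ltac:(lia)). lra.
Qed.

Lemma apsk_point_dist2_ge k k' n n' :
  (1 <= k <= K)%nat -> (1 <= k' <= K)%nat -> (n < N k)%nat -> (n' < N k')%nat ->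
  apsk_point r phi N k n <> apsk_point r phi N k' n' ->
  Rmin (delta ^ 2) (4 * (PI * rho / 3) ^ 2) <=
  dist2 (apsk_point r phi N k n) (apsk_point r phi N k' n').
Proof.
  intros Hk Hk' Hn Hn' Hne. pose proof PI_RGT_0.
  assert (Hgap : forall i j p q, (1 <= i)%nat -> (i < j <= K)%nat ->
            delta ^ 2 <= dist2 (apsk_point r phi N i p) (apsk_point r phi N j q)).
  { intros i j p q Hi Hj. unfold apsk_point.
    eapply Rle_trans; [|apply dist2_polar_ge_radius_gap; apply radius_ge0; lia].
    pose proof (radius_gap_trans i j Hi Hj).
    replace ((r i - r j) ^ 2) with ((r j - r i) ^ 2) by ring.
    apply pow_incr. lra. }
  destruct (Nat.lt_total k k') as [Hlt|[<-|Hlt]].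
  - eapply Rle_trans; [apply Rmin_l|]. apply Hgap; lia.
  - eapply Rle_trans; [apply Rmin_r|].
    assert (n <> n') by (intros <-; auto).
    assert (0 < INR (N k)) by (apply lt_0_INR; lia).
    unfold apsk_point. eapply Rle_trans; [|apply dist2_polar_roots_ge; auto].
    apply Rmult_le_compat_l; [lra|]. apply pow_incr. split.
    + apply Rmult_le_pos; [apply Rmult_le_pos|]; lra.
    + pose proof (radius_ge_ring_size k Hk).
      apply Rmult_le_reg_r with (3 * INR (N k)); [lra|].
      unfold Rdiv. field_simplify; [|lra]. nra.
  - eapply Rle_trans; [apply Rmin_l|]. rewrite dist2_comm.
    apply Hgap; lia.
Qed.

End RingGeometry.

Lemma sumN1_INR f n : INR (sumN1 f n) = sumR1 (fun k => INR (f k)) n.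
Proof. induction n as [|n IH]; simpl; [reflexivity|]. rewrite plus_INR, IH. reflexivity. Qed.

Lemma sumR1_le f g n : (forall k, (1 <= k <= n)%nat -> f k <= g k) -> sumR1 f n <= sumR1 g n.
Proof.
  induction n as [|n IH]; intros H; simpl; [lra|].
  apply Rplus_le_compat; [apply IH; intros; apply H; lia|apply H; lia].
Qed.

Lemma sumR1_ext f g n : (forall k, (1 <= k <= n)%nat -> f k = g k) -> sumR1 f n = sumR1 g n.
Proof.
  induction n as [|n IH]; intros H; simpl; [reflexivity|].
  rewrite IH, H; [reflexivity|lia|intros; apply H; lia].
Qed.

Lemma sumR1_scal c f n : sumR1 (fun k => c * f k) n = c * sumR1 f n.
Proof. induction n as [|n IH]; simpl; [ring|]. rewrite IH. ring. Qed.

Lemma sumR1_pred f n : (1 <= n)%nat -> sumR1 f n = sumR1 f (n - 1) + f n.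
Proof. intros Hn. destruct n; [lia|]. simpl. rewrite Nat.sub_0_r. reflexivity. Qed.

Lemma sumR1_id n : sumR1 INR n = INR n * (INR n + 1) / 2.
Proof. induction n as [|n IH]; cbn [sumR1]; [simpl; field|]. rewrite IH, S_INR. field. Qed.

Lemma sumR1_cube n : sumR1 (fun k => INR k ^ 3) n = (INR n * (INR n + 1) / 2) ^ 2.
Proof. induction n as [|n IH]; cbn [sumR1]; [simpl; field|]. rewrite IH, S_INR. field. Qed.

Lemma E0_le m K N rt B : sumN1 N K = (2 ^ m)%nat ->
  (forall k, (1 <= k <= K)%nat -> rt k ^ 2 <= B) -> E0 m K N rt <= B.
Proof.
  intros Hsum Hrt. unfold E0.
  assert (HM : 0 < 2 ^ m) by (apply pow_lt; lra).
  assert (sumR1 (fun k => INR (N k) * rt k ^ 2) K <= B * 2 ^ m).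
  { rewrite <- (pow_INR 2), <- Hsum, sumN1_INR, <- sumR1_scal.
    apply sumR1_le. intros k Hk. rewrite Rmult_comm.
    apply Rmult_le_compat_r; [apply pos_INR|auto]. }
  apply Rmult_le_reg_l with (2 ^ m); [lra|].
  rewrite <- Rmult_assoc, Rinv_r by lra. lra.
Qed.

Lemma E0_ge m K N rt c : 0 <= c -> (forall k, (1 <= k <= K)%nat -> c * INR k <= rt k) ->
  c ^ 2 / 2 ^ m * sumR1 (fun k => INR (N k) * INR k ^ 2) K <= E0 m K N rt.
Proof.
  intros Hc Hrt. unfold E0, Rdiv.
  rewrite (Rmult_comm (c ^ 2)), Rmult_assoc, <- sumR1_scal.
  apply Rmult_le_compat_l; [left; apply Rinv_0_lt_compat, pow_lt; lra|].
  apply sumR1_le. intros k Hk.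
  assert (0 <= c * INR k) by (apply Rmult_le_pos; [lra|apply pos_INR]).
  assert ((c * INR k) ^ 2 <= rt k ^ 2) by (apply pow_incr; auto).
  pose proof (pos_INR (N k)). nra.
Qed.

Lemma ring_moment_ge K N : (1 <= K)%nat ->
  (forall k, (1 <= k < K)%nat -> (k <= N k)%nat) -> (1 <= N K)%nat ->
  INR K ^ 4 / 16 <= sumR1 (fun k => INR (N k) * INR k ^ 2) K.
Proof.
  intros HK HNk HNK. rewrite sumR1_pred by exact HK.
  assert (Hinner : sumR1 (fun k => INR k ^ 3) (K - 1) <= sumR1 (fun k => INR (N k) * INR k ^ 2) (K - 1)).
  { apply sumR1_le. intros k Hk.
    assert (INR k <= INR (N k)) by (apply le_INR, HNk; lia).
    pose proof (pow2_ge_0 (INR k)). simpl. nra. }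
  rewrite sumR1_cube, minus_INR in Hinner by exact HK. simpl (INR 1) in Hinner.
  assert (1 <= INR (N K)) by (apply (le_INR 1); exact HNK).
  set (x := INR K) in *.
  assert (x ^ 2 <= INR (N K) * x ^ 2) by (pose proof (pow2_ge_0 x); nra).
  (* ((x - 1) x / 2)^2 + x^2 - x^4 / 16 = x^2 (3 (x - 4/3)^2 + 44/3) / 16 *)
  assert (0 <= x ^ 2 * (3 * (x - 4 / 3) ^ 2 + 44 / 3)) by (apply Rmult_le_pos; [apply pow2_ge_0|nra]).
  nra.
Qed.

Section ApskFamilyMember.

Variables (m K a : nat) (N : nat -> nat) (rt phi : nat -> R).
Variables (cK1 cK2 r1 r2 d1 d2 n2 : R).
Hypothesis cK1_pos : 0 < cK1.
Hypothesis r1_pos : 0 < r1.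
Hypothesis d1_pos : 0 < d1.
Hypothesis n2_pos : 0 < n2.
Hypothesis m_ge2 : (2 <= m)%nat.
Hypothesis K_bounds : cK1 * sqrt (2 ^ m) <= INR K <= cK2 * sqrt (2 ^ m).
Hypothesis rt_bounds : forall k, (1 <= k <= K)%nat ->
  r1 * (INR k / sqrt (2 ^ m)) <= rt k <= r2 * (INR k / sqrt (2 ^ m)).
Hypothesis rt_gap : forall k, (1 <= k <= K - 1)%nat ->
  d1 / sqrt (2 ^ m) <= rt (S k) - rt k <= d2 / sqrt (2 ^ m).
Hypothesis a_pos : (1 <= a)%nat.
Hypothesis N_inner : forall k, (1 <= k <= K - 1)%nat -> N k = (a * k)%nat.
Hypothesis N_outer : N K = (2 ^ m - sumN1 N (K - 1))%nat /\ (sumN1 N (K - 1) < 2 ^ m)%nat.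
Hypothesis N_outer_le : INR (N K) <= n2 * INR K.
Hypothesis phi_aligned : forall k, (1 <= k <= K - 1)%nat -> phi (S k) - phi k = 0.

Lemma sqrt_pow2_m_pos : 0 < sqrt (2 ^ m).
Proof. apply sqrt_lt_R0, pow_lt. lra. Qed.

Lemma K_pos : (1 <= K)%nat.
Proof.
  apply (INR_lt 0). simpl. pose proof sqrt_pow2_m_pos.
  assert (0 < cK1 * sqrt (2 ^ m)) by (apply Rmult_lt_0_compat; lra). lra.
Qed.

Lemma K_sq_ge : cK1 ^ 2 * 2 ^ m <= INR K ^ 2.
Proof.
  rewrite <- (pow2_sqrt (2 ^ m)) by (left; apply pow_lt; lra).
  rewrite <- Rpow_mult_distr. apply pow_incr.
  pose proof sqrt_pow2_m_pos. split; [nra|lra].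
Qed.

Lemma ring_sizes_sum : sumN1 N K = (2 ^ m)%nat.
Proof.
  pose proof K_pos. replace K with (S (K - 1)) at 1 by lia.
  simpl sumN1. replace (S (K - 1)) with K by lia. destruct N_outer. lia.
Qed.

Lemma ring_size_ge_index k : (1 <= k < K)%nat -> (k <= N k)%nat.
Proof. intros Hk. rewrite N_inner by lia. nia. Qed.

Lemma outer_ring_size_pos : (1 <= N K)%nat.
Proof. destruct N_outer. lia. Qed.

Lemma ring_size_pos k : (1 <= k <= K)%nat -> (1 <= N k)%nat.
Proof.
  intros Hk. destruct (Nat.eq_dec k K) as [->|Hne]; [exact outer_ring_size_pos|].
  pose proof (ring_size_ge_index k ltac:(lia)). lia.
Qed.

Lemma ring_factor_le (HK2 : (2 <= K)%nat) : INR a <= 4 / cK1 ^ 2.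
Proof.
  assert (Hsum : INR (sumN1 N (K - 1)) = INR a * (INR (K - 1) * (INR (K - 1) + 1) / 2)).
  { rewrite sumN1_INR, <- sumR1_id, <- sumR1_scal.
    apply sumR1_ext. intros k Hk. rewrite N_inner, mult_INR by lia. reflexivity. }
  assert (Hlt : INR (sumN1 N (K - 1)) < 2 ^ m)
    by (rewrite <- (pow_INR 2); apply lt_INR; apply N_outer).
  rewrite Hsum, minus_INR in Hlt by lia. simpl (INR 1) in Hlt.
  assert (2 <= INR K) by (apply (le_INR 2); lia).
  pose proof K_sq_ge. pose proof (pos_INR a).
  assert (INR K ^ 2 / 4 <= (INR K - 1) * (INR K - 1 + 1) / 2) by nra.
  assert (INR a * (INR K ^ 2 / 4) < 2 ^ m)
    by (eapply Rle_lt_trans; [apply Rmult_le_compat_l|]; eauto).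
  assert (INR a * (cK1 ^ 2 * 2 ^ m) <= INR a * INR K ^ 2) by (apply Rmult_le_compat_l; lra).
  assert (INR a * cK1 ^ 2 < 4) by (pose proof (pow_lt 2 m ltac:(lra)); nra).
  apply Rmult_le_reg_r with (cK1 ^ 2); [apply pow_lt; lra|].
  unfold Rdiv. rewrite Rmult_assoc, Rinv_l by (apply pow_nonzero; lra). lra.
Qed.

Lemma ring_size_le k : (1 <= k <= K)%nat -> INR (N k) <= (4 / cK1 ^ 2 + n2) * INR k.
Proof.
  intros Hk. assert (1 <= INR k) by (apply (le_INR 1); lia).
  assert (0 < 4 / cK1 ^ 2) by (apply Rdiv_lt_0_compat; [lra|apply pow_lt; lra]).
  destruct (Nat.eq_dec k K) as [->|Hne]; [nra|].
  rewrite N_inner, mult_INR by lia. pose proof (ring_factor_le ltac:(lia)). nra.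
Qed.

Lemma energy_ge : (r1 * cK1 ^ 2 / 4) ^ 2 <= E0 m K N rt.
Proof.
  pose proof sqrt_pow2_m_pos. pose proof K_pos.
  assert (HM : sqrt (2 ^ m) ^ 2 = 2 ^ m) by (apply pow2_sqrt; left; apply pow_lt; lra).
  assert (0 < 2 ^ m) by (apply pow_lt; lra).
  set (c := r1 / sqrt (2 ^ m)).
  assert (0 <= c) by (apply Rlt_le, Rdiv_lt_0_compat; lra).
  assert (HE : c ^ 2 / 2 ^ m * sumR1 (fun k => INR (N k) * INR k ^ 2) K <= E0 m K N rt).
  { apply E0_ge; auto. intros k Hk. destruct (rt_bounds k Hk). unfold c, Rdiv in *. lra. }
  pose proof (ring_moment_ge K N K_pos ring_size_ge_index outer_ring_size_pos).
  assert ((cK1 ^ 2 * 2 ^ m) ^ 2 <= INR K ^ 4).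
  { replace (INR K ^ 4) with ((INR K ^ 2) ^ 2) by ring. apply pow_incr.
    pose proof K_sq_ge. split; [apply Rmult_le_pos; [apply pow2_ge_0|lra]|lra]. }
  assert (0 <= c ^ 2 / 2 ^ m)
    by (apply Rmult_le_pos; [apply pow2_ge_0|left; apply Rinv_0_lt_compat; lra]).
  replace ((r1 * cK1 ^ 2 / 4) ^ 2) with (c ^ 2 / 2 ^ m * ((cK1 ^ 2 * 2 ^ m) ^ 2 / 16))
    by (unfold c; set (s := sqrt (2 ^ m)) in *; rewrite <- HM; field; lra).
  eapply Rle_trans; [|exact HE]. apply Rmult_le_compat_l; lra.
Qed.

Lemma energy_le : E0 m K N rt <= (r2 * cK2) ^ 2.
Proof.
  pose proof sqrt_pow2_m_pos.
  apply E0_le; [exact ring_sizes_sum|]. intros k Hk. destruct (rt_bounds k Hk) as [Hlo Hhi].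
  assert (INR k <= INR K) by (apply le_INR; lia).
  assert (1 <= INR k) by (apply (le_INR 1); lia).
  assert (0 < INR k / sqrt (2 ^ m)) by (apply Rdiv_lt_0_compat; lra).
  assert (0 < r1 * (INR k / sqrt (2 ^ m))) by (apply Rmult_lt_0_compat; lra).
  assert (0 < r2) by (apply (Rmult_lt_reg_r (INR k / sqrt (2 ^ m))); lra).
  assert (INR k / sqrt (2 ^ m) <= cK2).
  { apply Rmult_le_reg_r with (sqrt (2 ^ m)); [lra|].
    unfold Rdiv. rewrite Rmult_assoc, Rinv_l; lra. }
  apply pow_incr. split; [lra|]. eapply Rle_trans; [apply Hhi|]. apply Rmult_le_compat_l; lra.
Qed.

Lemma energy_pos : 0 < E0 m K N rt.
Proof.
  pose proof energy_ge.
  assert (0 < (r1 * cK1 ^ 2 / 4) ^ 2) by (apply pow_lt; pose proof (pow_lt cK1 2 cK1_pos); nra).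
  lra.
Qed.

Lemma inv_sqrt_energy_sq : (/ sqrt (E0 m K N rt)) ^ 2 = / E0 m K N rt.
Proof.
  pose proof energy_pos. rewrite pow_inv, pow2_sqrt; lra.
Qed.

Lemma rnorm_gap k : (1 <= k < K)%nat ->
  rnorm m K N rt k + d1 / sqrt (2 ^ m) / sqrt (E0 m K N rt) <= rnorm m K N rt (S k).
Proof.
  intros Hk. destruct (rt_gap k ltac:(lia)) as [Hgap _]. unfold rnorm, Rdiv.
  assert (0 < / sqrt (E0 m K N rt)) by (apply Rinv_0_lt_compat, sqrt_lt_R0, energy_pos).
  unfold Rdiv in Hgap. nra.
Qed.

Lemma rnorm_ge_ring_size k : (1 <= k <= K)%nat ->
  r1 / sqrt (2 ^ m) / sqrt (E0 m K N rt) / (4 / cK1 ^ 2 + n2) * INR (N k) <= rnorm m K N rt k.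
Proof.
  intros Hk. destruct (rt_bounds k Hk) as [Hrt _]. pose proof (ring_size_le k Hk).
  pose proof sqrt_pow2_m_pos. pose proof (sqrt_lt_R0 _ energy_pos).
  assert (0 < 4 / cK1 ^ 2) by (apply Rdiv_lt_0_compat; [lra|apply pow_lt; lra]).
  set (A := 4 / cK1 ^ 2 + n2) in *. assert (0 < A) by (unfold A; lra).
  replace (r1 / sqrt (2 ^ m) / sqrt (E0 m K N rt) / A * INR (N k))
    with (r1 / sqrt (2 ^ m) * (INR (N k) / A) / sqrt (E0 m K N rt)) by (field; repeat split; lra).
  unfold rnorm, Rdiv at 3 4. apply Rmult_le_compat_r; [apply Rlt_le, Rinv_0_lt_compat; lra|].
  eapply Rle_trans; [|exact Hrt].
  replace (r1 * (INR k / sqrt (2 ^ m))) with (r1 / sqrt (2 ^ m) * INR k) by (field; lra).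
  apply Rmult_le_compat_l; [apply Rlt_le, Rdiv_lt_0_compat; lra|].
  apply Rmult_le_reg_r with A; [lra|].
  unfold Rdiv. rewrite Rmult_assoc, Rinv_l by lra. lra.
Qed.

Lemma apsk_dist2_ge x y :
  apsk m K N rt phi x -> apsk m K N rt phi y -> x <> y ->
  Rmin (d1 ^ 2) (4 * (PI * r1 / (3 * (4 / cK1 ^ 2 + n2))) ^ 2) / (r2 * cK2) ^ 2 * / 2 ^ m
  <= dist2 x y.
Proof.
  rewrite !apsk_iff. intros [k [n [Hk [Hn ->]]]] [k' [n' [Hk' [Hn' ->]]]] Hne.
  pose proof PI_RGT_0. pose proof sqrt_pow2_m_pos. pose proof energy_pos.
  pose proof (sqrt_lt_R0 _ energy_pos). pose proof energy_le.
  assert (0 < 4 / cK1 ^ 2) by (apply Rdiv_lt_0_compat; [lra|apply pow_lt; lra]).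
  set (E := E0 m K N rt) in *. set (s := sqrt (2 ^ m)) in *.
  set (A := 4 / cK1 ^ 2 + n2) in *. assert (0 < A) by (unfold A; lra).
  eapply Rle_trans;
    [|apply (apsk_point_dist2_ge _ _ _ K (d1 / s / sqrt E) (r1 / s / sqrt E / A)); auto].
  - assert (Hs2 : s ^ 2 = 2 ^ m) by (apply pow2_sqrt; left; apply pow_lt; lra).
    assert (HE2 : sqrt E ^ 2 = E) by (apply pow2_sqrt; lra).
    assert (Hsq : forall c, (c / s / sqrt E) ^ 2 = c ^ 2 * / (2 ^ m * E)).
    { intros c. replace (2 ^ m * E) with (s ^ 2 * sqrt E ^ 2) by (rewrite Hs2, HE2; reflexivity).
      field. lra. }
    assert (Ht : / (r2 * cK2) ^ 2 * / 2 ^ m <= / (2 ^ m * E)).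
    { rewrite <- Rinv_mult. apply Rinv_le_contravar; [apply Rmult_lt_0_compat; [apply pow_lt|]; lra|].
      rewrite Rmult_comm. apply Rmult_le_compat_r; [left; apply pow_lt|]; lra. }
    set (X := 4 * (PI * r1 / (3 * A)) ^ 2).
    assert (HX : 4 * (PI * (r1 / s / sqrt E / A) / 3) ^ 2 = X * / (2 ^ m * E)).
    { unfold X. rewrite Rmult_assoc, <- Hsq. field. repeat split; lra. }
    rewrite Hsq, HX. unfold Rdiv. rewrite Rmult_assoc.
    apply Rmin_scale_le; [apply pow2_ge_0|unfold X; pose proof (pow2_ge_0 (PI * r1 / (3 * A))); lra|].
    split; [|exact Ht].
    apply Rmult_le_pos; left; apply Rinv_0_lt_compat; [lra|apply pow_lt; lra].
  - apply Rlt_le, Rdiv_lt_0_compat; [apply Rdiv_lt_0_compat|]; lra.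
  - apply Rlt_le, Rdiv_lt_0_compat; [apply Rdiv_lt_0_compat; [apply Rdiv_lt_0_compat|]|]; lra.
  - apply rnorm_gap.
  - apply rnorm_ge_ring_size.
Qed.

Lemma energy_scaled_le c D : 0 <= D -> D <= (c / sqrt (2 ^ m)) ^ 2 ->
  D * / E0 m K N rt <= c ^ 2 / (r1 * cK1 ^ 2 / 4) ^ 2 * / 2 ^ m.
Proof.
  intros HD HDc. pose proof sqrt_pow2_m_pos. pose proof energy_ge.
  assert (0 < (r1 * cK1 ^ 2 / 4) ^ 2) by (apply pow_lt; pose proof (pow_lt cK1 2 cK1_pos); nra).
  rewrite <- (pow2_sqrt (2 ^ m)) by (left; apply pow_lt; lra).
  replace (c ^ 2 / (r1 * cK1 ^ 2 / 4) ^ 2 * / sqrt (2 ^ m) ^ 2)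
    with ((c / sqrt (2 ^ m)) ^ 2 * / (r1 * cK1 ^ 2 / 4) ^ 2) by (field; lra).
  apply Rmult_le_compat; auto; [left; apply Rinv_0_lt_compat, energy_pos|].
  apply Rinv_le_contravar; lra.
Qed.

Lemma apsk_close_pair_one_ring : K = 1%nat -> exists x y,
  apsk m K N rt phi x /\ apsk m K N rt phi y /\ x <> y /\
  dist2 x y <= (2 * r2) ^ 2 / (r1 * cK1 ^ 2 / 4) ^ 2 * / 2 ^ m.
Proof.
  intros HK1. pose proof sqrt_pow2_m_pos. pose proof energy_pos.
  assert (HN1 : N 1%nat = (2 ^ m)%nat)
    by (destruct N_outer as [HNK _]; rewrite HK1 in HNK; simpl in HNK; lia).
  assert (4 <= 2 ^ m)%nat by (change 4%nat with (2 ^ 2)%nat; apply Nat.pow_le_mono_r; lia).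
  destruct (rt_bounds 1 ltac:(lia)) as [Hrt1 Hrt1']. simpl (INR 1) in Hrt1, Hrt1'.
  assert (0 < r1 * (1 / sqrt (2 ^ m))) by (apply Rmult_lt_0_compat; [|apply Rdiv_lt_0_compat]; lra).
  exists (apsk_point (rnorm m K N rt) phi N 1 0), (apsk_point (rnorm m K N rt) phi N 1 1).
  split; [|split; [|split]].
  - apply apsk_iff. exists 1%nat, 0%nat. repeat split; lia.
  - apply apsk_iff. exists 1%nat, 1%nat. repeat split; lia.
  - apply neq_of_dist2_pos. unfold apsk_point.
    eapply Rlt_le_trans; [|apply dist2_polar_roots_ge; lia].
    assert (0 < INR (N 1%nat)) by (apply lt_0_INR; lia).
    assert (0 < rnorm m K N rt 1)
      by (apply Rdiv_lt_0_compat; [|apply sqrt_lt_R0]; lra).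
    apply Rmult_lt_0_compat; [lra|apply pow_lt].
    pose proof PI_RGT_0. apply Rdiv_lt_0_compat; [apply Rmult_lt_0_compat|]; lra.
  - unfold apsk_point. eapply Rle_trans; [apply dist2_polar_same_radius_le|].
    replace (4 * rnorm m K N rt 1 ^ 2) with ((2 * rt 1%nat) ^ 2 * / E0 m K N rt)
      by (unfold rnorm, Rdiv; rewrite <- inv_sqrt_energy_sq; ring).
    apply energy_scaled_le; [apply pow2_ge_0|].
    apply pow_incr. unfold Rdiv in *. lra.
Qed.

Lemma apsk_close_pair_two_rings : (2 <= K)%nat -> exists x y,
  apsk m K N rt phi x /\ apsk m K N rt phi y /\ x <> y /\
  dist2 x y <= d2 ^ 2 / (r1 * cK1 ^ 2 / 4) ^ 2 * / 2 ^ m.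
Proof.
  intros HK2. pose proof sqrt_pow2_m_pos. pose proof energy_pos.
  destruct (rt_gap 1 ltac:(lia)) as [Hgap Hgap'].
  assert (0 < d1 / sqrt (2 ^ m)) by (apply Rdiv_lt_0_compat; lra).
  assert (Hphi : phi 2%nat = phi 1%nat) by (pose proof (phi_aligned 1 ltac:(lia)); lra).
  pose proof (ring_size_pos 1 ltac:(lia)). pose proof (ring_size_pos 2 ltac:(lia)).
  exists (apsk_point (rnorm m K N rt) phi N 1 0), (apsk_point (rnorm m K N rt) phi N 2 0).
  assert (Hd : dist2 (apsk_point (rnorm m K N rt) phi N 1 0) (apsk_point (rnorm m K N rt) phi N 2 0)
               = (rt 2%nat - rt 1%nat) ^ 2 * / E0 m K N rt).
  { unfold apsk_point. rewrite Hphi. simpl (INR 0).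
    replace (phi 1%nat + 2 * PI * 0 / INR (N 2%nat)) with (phi 1%nat + 2 * PI * 0 / INR (N 1%nat))
      by (unfold Rdiv; ring).
    rewrite dist2_polar_same_angle. unfold rnorm, Rdiv. rewrite <- inv_sqrt_energy_sq. ring. }
  split; [|split; [|split]].
  - apply apsk_iff. exists 1%nat, 0%nat. repeat split; lia.
  - apply apsk_iff. exists 2%nat, 0%nat. repeat split; lia.
  - apply neq_of_dist2_pos. rewrite Hd.
    apply Rmult_lt_0_compat; [apply pow_lt; lra|apply Rinv_0_lt_compat; lra].
  - rewrite Hd. apply energy_scaled_le; [apply pow2_ge_0|]. apply pow_incr. lra.
Qed.

Lemma apsk_close_pair : exists x y,
  apsk m K N rt phi x /\ apsk m K N rt phi y /\ x <> y /\
  dist2 x y <= (d2 ^ 2 + 4 * r2 ^ 2) / (r1 * cK1 ^ 2 / 4) ^ 2 * / 2 ^ m.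
Proof.
  assert (Hmono : forall X, X <= d2 ^ 2 + 4 * r2 ^ 2 ->
            X / (r1 * cK1 ^ 2 / 4) ^ 2 * / 2 ^ m
            <= (d2 ^ 2 + 4 * r2 ^ 2) / (r1 * cK1 ^ 2 / 4) ^ 2 * / 2 ^ m).
  { intros X HX. pose proof (pow_lt cK1 2 cK1_pos).
    unfold Rdiv. apply Rmult_le_compat_r; [left; apply Rinv_0_lt_compat, pow_lt; lra|].
    apply Rmult_le_compat_r; [left; apply Rinv_0_lt_compat, pow_lt; nra|exact HX]. }
  pose proof (pow2_ge_0 d2). pose proof (pow2_ge_0 r2). pose proof K_pos.
  destruct (Nat.eq_dec K 1) as [HK1|HK1].
  - destruct (apsk_close_pair_one_ring HK1) as [x [y [Hx [Hy [Hxy Hd]]]]].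
    exists x, y. repeat split; auto. eapply Rle_trans; [exact Hd|]. apply Hmono. lra.
  - destruct (apsk_close_pair_two_rings ltac:(lia)) as [x [y [Hx [Hy [Hxy Hd]]]]].
    exists x, y. repeat split; auto. eapply Rle_trans; [exact Hd|]. apply Hmono. lra.
Qed.

Lemma apsk_dmin2_between : exists d, is_dmin2 (apsk m K N rt phi) d /\
  Rmin (d1 ^ 2) (4 * (PI * r1 / (3 * (4 / cK1 ^ 2 + n2))) ^ 2) / (r2 * cK2) ^ 2 * / 2 ^ m <= d <=
  (d2 ^ 2 + 4 * r2 ^ 2) / (r1 * cK1 ^ 2 / 4) ^ 2 * / 2 ^ m.
Proof.
  apply (is_dmin2_exists_between _ _ _ _ (apsk_enum m K N rt phi)).
  - apply apsk_dist2_ge.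
  - apply apsk_close_pair.
Qed.

End ApskFamilyMember.
Theorem proposition1
  (K : nat -> nat) (a : nat -> nat) (N : nat -> nat -> nat)
  (rt : nat -> nat -> R) (phi : nat -> nat -> R)
  (* (1) K_m = Theta(sqrt(2^m)) *)
  (HK : exists c1 c2, 0 < c1 /\ 0 < c2 /\ forall m, (2 <= m)%nat ->
          c1 * sqrt (2 ^ m) <= INR (K m) <= c2 * sqrt (2 ^ m))
  (* (2) rt_k = Theta(k / sqrt(2^m)), rt_{k+1} - rt_k = Theta(1/sqrt(2^m)) *)
  (Hr : exists c1 c2, 0 < c1 /\ 0 < c2 /\ forall m k, (2 <= m)%nat ->
          (1 <= k <= K m)%nat ->
          c1 * (INR k / sqrt (2 ^ m)) <= rt m k <= c2 * (INR k / sqrt (2 ^ m)))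
  (Hdr : exists c1 c2, 0 < c1 /\ 0 < c2 /\ forall m k, (2 <= m)%nat ->
          (1 <= k <= K m - 1)%nat ->
          c1 / sqrt (2 ^ m) <= rt m (S k) - rt m k <= c2 / sqrt (2 ^ m))
  (* (3) N_k = a_m k for k < K_m, N_{K_m} = 2^m - sum_{i<K_m} N_i,
         a_m positive, N_{K_m} > 0 and N_{K_m} = Theta(K_m) *)
  (Ha : forall m, (2 <= m)%nat -> (1 <= a m)%nat)
  (HN : forall m k, (2 <= m)%nat -> (1 <= k <= K m - 1)%nat ->
          N m k = (a m * k)%nat)
  (HNK : forall m, (2 <= m)%nat ->
          N m (K m) = (2 ^ m - sumN1 (N m) (K m - 1))%nat /\
          (sumN1 (N m) (K m - 1) < 2 ^ m)%nat)
  (HNKth : exists c1 c2, 0 < c1 /\ 0 < c2 /\ forall m, (2 <= m)%nat ->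
          c1 * INR (K m) <= INR (N m (K m)) <= c2 * INR (K m))
  (* (4) aligned phase offsets *)
  (Hphi : forall m k, (2 <= m)%nat -> (1 <= k <= K m - 1)%nat ->
          phi m (S k) - phi m k = 0) :
  (* d_min^2(X) = Theta(2^{-m}) *)
  exists c1 c2, 0 < c1 /\ 0 < c2 /\ forall m, (2 <= m)%nat ->
    exists d, is_dmin2 (apsk m (K m) (N m) (rt m) (phi m)) d /\
      c1 * / 2 ^ m <= d <= c2 * / 2 ^ m.
Proof.
  destruct HK as [cK1 [cK2 [cK1_pos [cK2_pos HK']]]].
  destruct Hr as [r1 [r2 [r1_pos [r2_pos Hr']]]].
  destruct Hdr as [d1 [d2 [d1_pos [d2_pos Hdr']]]].
  destruct HNKth as [n1 [n2 [_ [n2_pos HNK']]]].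
  pose proof PI_RGT_0.
  assert (0 < 4 / cK1 ^ 2) by (apply Rdiv_lt_0_compat; [lra|apply pow_lt; lra]).
  exists (Rmin (d1 ^ 2) (4 * (PI * r1 / (3 * (4 / cK1 ^ 2 + n2))) ^ 2) / (r2 * cK2) ^ 2),
         ((d2 ^ 2 + 4 * r2 ^ 2) / (r1 * cK1 ^ 2 / 4) ^ 2).
  split; [|split].
  - apply Rdiv_lt_0_compat; [apply Rmin_pos|apply pow_lt; nra].
    + apply pow_lt. lra.
    + apply Rmult_lt_0_compat; [lra|apply pow_lt].
      apply Rdiv_lt_0_compat; [apply Rmult_lt_0_compat|]; lra.
  - apply Rdiv_lt_0_compat; [pose proof (pow_lt d2 2 d2_pos); pose proof (pow2_ge_0 r2); lra|].
    apply pow_lt. pose proof (pow_lt cK1 2 cK1_pos). nra.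
  - intros m Hm. destruct (HNK' m Hm) as [_ HNKle].
    apply (apsk_dmin2_between m (K m) (a m)); auto.
Qed.
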